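(* For every $k\in\mathbb{N}$, if $W_0=e$ and, for each $j<k$, $(W_j,U_j)\in O$ and $(U_j,W_{j+1})\in I$, then $n(W_k)=\dfrac{4(4^k-1)}{3}$.
   Context: Let $\mathbb{T}$ be the set of finite terms defined inductively by: the constant $e\in\mathbb{T}$; and if $X\in\mathbb{T}$ and $Xs$ is a finite (possibly empty) list of elements of $\mathbb{T}$, then $v(X,Xs)\in\mathbb{T}$ and $w(X,Xs)\in\mathbb{T}$. Write $[\,]$ for the empty list and $[Y|Xs]$ for the list with first element $Y$ followed by $Xs$. Define $n:\mathbb{T}\to\mathbb{N}$ by $n(e)=0$, $n(v(X,[\,]))=2^{n(X)+1}-1$, $n(v(X,[Y|Xs]))=(n(w(Y,Xs))+1)2^{n(X)+1}-1$, $n(w(X,[\,]))=2^{n(X)+2}-2$, $n(w(X,[Y|Xs]))=(n(v(Y,Xs))+2)2^{n(X)+1}-2$. Let $\sigma\subseteq\mathbb{T}\times\mathbb{T}$ be the smallest relation such that: (1) $\sigma(e,v(e,[\,]))$; (2) $\sigma(v(e,[\,]),w(e,[\,]))$; (3) if $\sigma(X,X')$ then $\sigma(v(e,[X|Xs]),w(X',Xs))$; (4) if $\sigma(P,T)$ then $\sigma(v(T,Xs),w(e,[P|Xs]))$; (5) if $\sigma(T,T')$ then $\sigma(w(T,[\,]),v(T',[\,]))$; (6) $\sigma(w(Z,[e]),v(Z,[e]))$; (7) if $\sigma(Y,Y')$ then $\sigma(w(Z,[e,Y|Ys]),v(Z,[Y'|Ys]))$; (8) if $\sigma(X',X)$ then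 $\sigma(w(Z,[X|Xs]),v(Z,[e,X'|Xs]))$. Let $O\subseteq\mathbb{T}\times\mathbb{T}$ consist of $(e,v(e,[\,]))$, $(w(X,Xs),v(e,[X|Xs]))$, and $(v(X,Xs),v(X',Xs))$ whenever $\sigma(X,X')$. Let $I\subseteq\mathbb{T}\times\mathbb{T}$ consist of $(e,w(e,[\,]))$, $(v(X,Xs),w(e,[X|Xs]))$, and $(w(X,Xs),w(X',Xs))$ whenever $\sigma(X,X')$. (These emulate the maps $x\mapsto 2x+1$ and $x\mapsto 2x+2$.) *)

From Stdlib Require Import Arith List.
Import ListNotations.

Inductive term : Type :=
| e : term
| v : term -> list term -> term
| w : term -> list term -> term.

(** The auxiliary [nl b a l] computes
    n(v(X,l)) when b = true and n(w(X,l)) when b = false, where a = n(X).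
    (Truncated nat subtraction is exact here since the minuends are >= 2^(a+1).) *)
Fixpoint n (t : term) : nat :=
  match t with
  | e => 0
  | v X xs =>
      (fix nl (b : bool) (a : nat) (l : list term) : nat :=
         match l with
         | [] => if b then 2 ^ (a + 1) - 1 else 2 ^ (a + 2) - 2
         | Y :: l' =>
             if b then (nl false (n Y) l' + 1) * 2 ^ (a + 1) - 1
             else (nl true (n Y) l' + 2) * 2 ^ (a + 1) - 2
         end) true (n X) xs
  | w X xs =>
      (fix nl (b : bool) (a : nat) (l : list term) : nat :=
         match l with
         | [] => if b then 2 ^ (a + 1) - 1 else 2 ^ (a + 2) - 2
         | Y :: l' =>
             if b then (nl false (n Y) l' + 1) * 2 ^ (a + 1) - 1
             else (nl true (n Y) l' + 2) * 2 ^ (a + 1) - 2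
         end) false (n X) xs
  end.

Inductive sigma : term -> term -> Prop :=
| sigma1 : sigma e (v e [])
| sigma2 : sigma (v e []) (w e [])
| sigma3 : forall X X' Xs, sigma X X' -> sigma (v e (X :: Xs)) (w X' Xs)
| sigma4 : forall P T Xs, sigma P T -> sigma (v T Xs) (w e (P :: Xs))
| sigma5 : forall T T', sigma T T' -> sigma (w T []) (v T' [])
| sigma6 : forall Z, sigma (w Z [e]) (v Z [e])
| sigma7 : forall Z Y Y' Ys, sigma Y Y' -> sigma (w Z (e :: Y :: Ys)) (v Z (Y' :: Ys))
| sigma8 : forall Z X X' Xs, sigma X' X -> sigma (w Z (X :: Xs)) (v Z (e :: X' :: Xs)).

(** O emulates x |-> 2x+1. *)
Inductive O : term -> term -> Prop :=
| O1 : O e (v e [])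
| O2 : forall X Xs, O (w X Xs) (v e (X :: Xs))
| O3 : forall X X' Xs, sigma X X' -> O (v X Xs) (v X' Xs).

(** I emulates x |-> 2x+2. *)
Inductive I : term -> term -> Prop :=
| I1 : I e (w e [])
| I2 : forall X Xs, I (v X Xs) (w e (X :: Xs))
| I3 : forall X X' Xs, sigma X X' -> I (w X Xs) (w X' Xs).

Example n_test : n (v e [e]) = 5 /\ n (w e []) = 2 /\ n (w e [e]) = 4 /\ n (v (v e []) []) = 3.
Proof. repeat split; reflexivity. Qed.

(** Rule by rule, [sigma] emulates the successor: [sigma X Y] implies
    [n Y = n X + 1].  The defining equations of [n] become subtraction-free
    once shifted by 1 (for [v]) or 2 (for [w]), and in that form raising
    [n X] by one doubles [n (v X l) + 1] and [n (w X l) + 2].  Hence [O] and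
    [I] act as [x |-> 2x+1] and [x |-> 2x+2], one [O]-[I] round maps [x] to
    [4x+4], and [3 n(W_k) + 4 = 4^(k+1)]. *)
From Stdlib Require Import Arith List Lia.
Import ListNotations.

Lemma pow2_pos (a : nat) : 1 <= 2 ^ a.
Proof. pose proof (Nat.pow_nonzero 2 a); lia. Qed.

Lemma n_v_nil (X : term) : n (v X []) + 1 = 2 ^ (n X + 1).
Proof.
  change (n (v X [])) with (2 ^ (n X + 1) - 1).
  pose proof (pow2_pos (n X + 1)); lia.
Qed.

Lemma n_w_nil (X : term) : n (w X []) + 2 = 2 ^ (n X + 2).
Proof.
  change (n (w X [])) with (2 ^ (n X + 2) - 2).
  replace (n X + 2) with (S (n X + 1)) by lia; rewrite Nat.pow_succ_r'.
  pose proof (pow2_pos (n X + 1)); lia.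
Qed.

Lemma n_v_cons (X Y : term) (l : list term) :
  n (v X (Y :: l)) + 1 = (n (w Y l) + 1) * 2 ^ (n X + 1).
Proof.
  change (n (v X (Y :: l))) with ((n (w Y l) + 1) * 2 ^ (n X + 1) - 1).
  pose proof (pow2_pos (n X + 1)); nia.
Qed.

Lemma n_w_cons (X Y : term) (l : list term) :
  n (w X (Y :: l)) + 2 = (n (v Y l) + 2) * 2 ^ (n X + 1).
Proof.
  change (n (w X (Y :: l))) with ((n (v Y l) + 2) * 2 ^ (n X + 1) - 2).
  pose proof (pow2_pos (n X + 1)); nia.
Qed.

Lemma n_v_succ_head (X X' : term) (l : list term) :
  n X' = S (n X) -> n (v X' l) + 1 = 2 * (n (v X l) + 1).
Proof.
  intros HX; destruct l as [|Y l].
  - rewrite !n_v_nil, HX, <- Nat.pow_succ_r'; reflexivity.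
  - rewrite !n_v_cons, HX, (Nat.add_succ_l (n X)), Nat.pow_succ_r'; lia.
Qed.

Lemma n_w_succ_head (X X' : term) (l : list term) :
  n X' = S (n X) -> n (w X' l) + 2 = 2 * (n (w X l) + 2).
Proof.
  intros HX; destruct l as [|Y l].
  - rewrite !n_w_nil, HX, <- Nat.pow_succ_r'; reflexivity.
  - rewrite !n_w_cons, HX, (Nat.add_succ_l (n X)), Nat.pow_succ_r'; lia.
Qed.

Lemma sigma_n (X Y : term) : sigma X Y -> n Y = S (n X).
Proof.
  induction 1.
  - reflexivity.
  - reflexivity.
  - pose proof (n_v_cons e X Xs); pose proof (n_w_succ_head X X' Xs IHsigma).
    simpl in *; lia.
  - pose proof (n_w_cons e P Xs); pose proof (n_v_succ_head P T Xs IHsigma).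
    simpl in *; lia.
  - pose proof (n_w_nil T); pose proof (n_v_nil T').
    rewrite IHsigma in *; replace (S (n T) + 1) with (n T + 2) in * by lia; lia.
  - pose proof (n_w_cons Z e []); pose proof (n_v_cons Z e []).
    change (n (v e [])) with 1 in *; change (n (w e [])) with 2 in *; lia.
  - assert (Hc : n (v e (Y :: Ys)) + 2 = n (w Y' Ys) + 1).
    { pose proof (n_v_cons e Y Ys); pose proof (n_w_succ_head Y Y' Ys IHsigma).
      simpl in *; lia. }
    pose proof (n_w_cons Z e (Y :: Ys)); pose proof (n_v_cons Z Y' Ys).
    rewrite Hc in *; lia.
  - assert (Hc : n (v X Xs) + 2 = n (w e (X' :: Xs)) + 1).
    { pose proof (n_w_cons e X' Xs); pose proof (n_v_succ_head X' X Xs IHsigma).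
      simpl in *; lia. }
    pose proof (n_w_cons Z X Xs); pose proof (n_v_cons Z e (X' :: Xs)).
    rewrite Hc in *; lia.
Qed.

Lemma O_n (X Y : term) : O X Y -> n Y = 2 * n X + 1.
Proof.
  destruct 1.
  - reflexivity.
  - pose proof (n_v_cons e X Xs); simpl in *; lia.
  - pose proof (n_v_succ_head X X' Xs (sigma_n X X' H)); lia.
Qed.

Lemma I_n (X Y : term) : I X Y -> n Y = 2 * n X + 2.
Proof.
  destruct 1.
  - reflexivity.
  - pose proof (n_w_cons e X Xs); simpl in *; lia.
  - pose proof (n_w_succ_head X X' Xs (sigma_n X X' H)); lia.
Qed.

Lemma div3_of_4pow (k x : nat) : 3 * x + 4 = 4 ^ S k -> x = 4 * (4 ^ k - 1) / 3.
Proof.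
  rewrite Nat.pow_succ_r'; intros Hx.
  replace (4 * (4 ^ k - 1)) with (x * 3) by lia.
  rewrite Nat.div_mul; lia.
Qed.

Theorem proposition12 :
  forall (k : nat) (W U : nat -> term),
    W 0 = e ->
    (forall j, j < k -> O (W j) (U j) /\ I (U j) (W (S j))) ->
    n (W k) = 4 * (4 ^ k - 1) / 3.
Proof.
  intros k W U HW0 Hsteps.
  apply div3_of_4pow.
  assert (Hround : forall j, j <= k -> 3 * n (W j) + 4 = 4 ^ S j).
  { induction j as [|j IH]; intros Hj.
    - rewrite HW0; reflexivity.
    - destruct (Hsteps j Hj) as [HO HI].
      rewrite (I_n _ _ HI), (O_n _ _ HO), (Nat.pow_succ_r' 4 (S j)), <- IH by lia.
      lia. }
  exact (Hround k (le_n k)).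
Qed.
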